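(* Let $f$ and $g$ be discrete curves whose points lie on two distinct spheres $s^1,s^2\in\mathbb{P}(\mathcal{L})$, i.e. $\langle\mathfrak{f}_i,\mathfrak{s}^1\rangle=\langle\mathfrak{g}_i,\mathfrak{s}^2\rangle=0$ for all vertices $i$. If $(f,g)$ is a discrete Ribaucour pair, then every element of the 3-dimensional subspace $\mathcal{M}:=\mathrm{span}\{\mathfrak{s}^1,\mathfrak{s}^2,\mathfrak{p}\}\subset\mathbb{R}^{4,2}$ is a fixed point of every M-inversion of the R-evolution map of $(f,g)$.
   Context: Light cone model: $\mathbb{R}^{4,2}$ is $\mathbb{R}^6$ with a symmetric bilinear form $\langle\cdot,\cdot\rangle$ of signature $(4,2)$; $\mathcal{L}$ its light cone, $\mathbb{P}(\mathcal{L})$ its projectivization. A fixed vector $\mathfrak{p}$ with $\langle\mathfrak{p},\mathfrak{p}\rangle=-1$ is given; $v\in\mathbb{P}(\mathcal{L})$ with $\langle\mathfrak{v},\mathfrak{p}\rangle=0$ represent points of $\mathbb{R}^3\cup\{\infty\}$, the others oriented spheres (planes included); a point lies on a sphere iff representatives are orthogonal. Fraktur letters denote representatives. Inversion in $\mathfrak{a}$ ($\langle\mathfrak{a},\mathfrak{a}\rangle\neq0$): $\sigma_a(x)=x-\frac{2\langle x,\mathfrak{a}\rangle}{\langle\mathfrak{a},\mathfrak{a}\rangle}\mathfrak{a}$; M-inversion if $\langle\mathfrak{a},\mathfrak{p}\rangle=0$. A discrete curve is a map $f:\mathcal{V}\to\mathbb{P}(\mathcal{L})$ into points, $\mathcal{V}$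 a set of consecutive integers with edges $(ij)$ between consecutive vertices. Curves $f,g$ form a Ribaucour pair if for each edge $(ij)$ the points $f_i,f_j,g_j,g_i$ are concircular (linearly dependent representatives); then representatives can be chosen with $\mathfrak{f}_i-\mathfrak{f}_j+\mathfrak{g}_j-\mathfrak{g}_i=0$ and the R-evolution map assigns to $(ij)$ the M-inversion in $\mathfrak{r}_{ij}:=\mathfrak{f}_i-\mathfrak{f}_j=\mathfrak{g}_i-\mathfrak{g}_j$, the unique M-inversion mapping $f_i\mapsto f_j$ and $g_i\mapsto g_j$. *)

From HB Require Import structures.
From mathcomp Require Import all_boot all_order all_algebra.
Set Implicit Arguments. Unset Strict Implicit. Unset Printing Implicit Defensive.
Import Order.TTheory GRing.Theory Num.Theory.
Local Open Scope ring_scope.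

Definition vec42 (R : realFieldType) := 'rV[R]_6.

Definition ip42 {R : realFieldType} (u v : vec42 R) : R :=
  \sum_(i < 6) (if (i < 4)%N then 1 else -1) * u ord0 i * v ord0 i.

(* the vector lies on the light cone L and represents a point of P(L) *)
Definition lightlike {R : realFieldType} (v : vec42 R) : Prop :=
  v != 0 /\ ip42 v v = 0.

(* v represents a point of R^3 \cup {oo} (w.r.t. the fixed p) *)
Definition is_point {R : realFieldType} (p v : vec42 R) : Prop :=
  lightlike v /\ ip42 v p = 0.

(* v represents an oriented sphere (planes included) *)
Definition is_sphere {R : realFieldType} (p v : vec42 R) : Prop :=
  lightlike v /\ ip42 v p != 0.

Definition proj_eq {R : realFieldType} (u v : vec42 R) : Prop :=
  exists l : R, l != 0 /\ u = l *: v.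

Definition inversion {R : realFieldType} (a x : vec42 R) : vec42 R :=
  x - (2 * ip42 x a / ip42 a a) *: a.

Definition consecutive (V : int -> Prop) : Prop :=
  forall i j k : int, V i -> V k -> (i <= j <= k)%R -> V j.

Definition discrete_curve {R : realFieldType} (p : vec42 R)
  (V : int -> Prop) (f : int -> vec42 R) : Prop :=
  consecutive V /\ forall i, V i -> is_point p (f i).

Definition edge (V : int -> Prop) (i : int) : Prop := V i /\ V (i + 1)%R.

Definition lin_dep4 {R : realFieldType} (a b c d : vec42 R) : Prop :=
  exists x y z w : R, (x, y, z, w) != (0, 0, 0, 0) /\
    x *: a + y *: b + z *: c + w *: d = 0.

(* (f,g) Ribaucour pair: f_i, f_j, g_j, g_i concircular on every edge *)
Definition ribaucour_pair {R : realFieldType} (V : int -> Prop)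
  (f g : int -> vec42 R) : Prop :=
  forall i, edge V i -> lin_dep4 (f i) (f (i + 1)%R) (g (i + 1)%R) (g i).

Definition in_span3 {R : realFieldType} (a b c x : vec42 R) : Prop :=
  exists l1 l2 l3 : R, x = l1 *: a + l2 *: b + l3 *: c.

(* The reflection vector r = a f_i - b f_{i+1} also equals c g_i - d g_{i+1} by the closing
   condition of the quadrilateral. The first expression is orthogonal to s1 and the second to
   s2, since f lies on s1 and g on s2; both are orthogonal to p, since f_i and f_{i+1} represent
   points. Hence r is orthogonal to span{s1, s2, p}, and the inversion in r fixes this span
   pointwise. *)
From HB Require Import structures.
From mathcomp Require Import all_boot all_order all_algebra.
From mathcomp Require Import ring.
Set Implicit Arguments. Unset Strict Implicit. Unset Printing Implicit Defensive.
Import Order.TTheory GRing.Theory Num.Theory.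
Local Open Scope ring_scope.

Section InnerProduct.
Variable R : realFieldType.
Implicit Types (u v w : vec42 R) (k : R).

Lemma ip42C u v : ip42 u v = ip42 v u.
Proof. by apply: eq_bigr => i _; rewrite mulrAC. Qed.

Lemma ip42D u w v : ip42 (u + w) v = ip42 u v + ip42 w v.
Proof.
rewrite /ip42 -big_split; apply: eq_bigr => i _ /=; rewrite !mxE.
by set s := (if _ then _ else _); ring.
Qed.

Lemma ip42Z k u v : ip42 (k *: u) v = k * ip42 u v.
Proof.
rewrite /ip42 mulr_sumr; apply: eq_bigr => i _ /=; rewrite !mxE.
by set s := (if _ then _ else _); ring.
Qed.

Lemma ip42B u w v : ip42 (u - w) v = ip42 u v - ip42 w v.
Proof. by rewrite ip42D -scaleN1r ip42Z mulN1r. Qed.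

Lemma ip42_scaleB_orth k1 k2 u v w :
  ip42 u w = 0 -> ip42 v w = 0 -> ip42 (k1 *: u - k2 *: v) w = 0.
Proof. by move=> uw vw; rewrite ip42B !ip42Z uw vw !mulr0 subr0. Qed.

Lemma ip42_span3_orth (a b c x r : vec42 R) :
  in_span3 a b c x -> ip42 r a = 0 -> ip42 r b = 0 -> ip42 r c = 0 ->
  ip42 x r = 0.
Proof.
move=> [l1 [l2 [l3 ->]]] ra rb rc.
by rewrite !ip42D !ip42Z !(ip42C _ r) ra rb rc !mulr0 !addr0.
Qed.

Lemma inversion_fix (a x : vec42 R) : ip42 x a = 0 -> inversion a x = x.
Proof. by move=> xa; rewrite /inversion xa mulr0 mul0r scale0r subr0. Qed.

End InnerProduct.

Theorem proposition2p3 (R : realFieldType) (p s1 s2 : vec42 R)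
  (V : int -> Prop) (f g : int -> vec42 R) :
  ip42 p p = -1 ->
  discrete_curve p V f -> discrete_curve p V g ->
  is_sphere p s1 -> is_sphere p s2 -> ~ proj_eq s1 s2 ->
  (forall i, V i -> ip42 (f i) s1 = 0) ->
  (forall i, V i -> ip42 (g i) s2 = 0) ->
  ribaucour_pair V f g ->
  (* for every edge (i, i+1) and every choice of representatives
     a f_i, b f_{i+1}, c g_i, d g_{i+1} with
     a f_i - b f_{i+1} + d g_{i+1} - c g_i = 0, the M-inversion of the
     R-evolution map is the inversion in r = a f_i - b f_{i+1} *)
  forall (i : int) (a b c d : R), edge V i ->
    a != 0 -> b != 0 -> c != 0 -> d != 0 ->
    a *: f i - b *: f (i + 1) + d *: g (i + 1) - c *: g i = 0 ->
    let r := a *: f i - b *: f (i + 1) in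
    ip42 r r != 0 ->
    forall x : vec42 R, in_span3 s1 s2 p x -> inversion r x = x.
Proof.
move=> _ [_ f_pt] [_ g_pt] _ _ _ f_s1 g_s2 _ i a b c d [Vi Vi1] _ _ _ _ closing r _ x Mx.
have r_g : r = c *: g i - d *: g (i + 1).
  by apply/eqP; rewrite -subr_eq0 -closing /r opprB addrA.
apply: inversion_fix; apply: (ip42_span3_orth Mx).
- exact: ip42_scaleB_orth (f_s1 _ Vi) (f_s1 _ Vi1).
- by rewrite r_g; apply: ip42_scaleB_orth (g_s2 _ Vi) (g_s2 _ Vi1).
- exact: ip42_scaleB_orth (f_pt _ Vi).2 (f_pt _ Vi1).2.
Qed.
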